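(* Let $(X,d,b)$ be a bicomplete quasi-pseudometric type space. Let $J:X\to X$ be a continuous single-valued map such that $r\,d(x,y)\le d(Jx,Jy)$ for all $x,y\in X$, for some constant $r>0$, and let $F:X\to CB(X)$ be a set-valued map such that $$H(Fx,Fy)\le \alpha\big[d(Jx,Fx)+d(Jy,Fy)\big]\quad\text{for all }x,y\in X,$$ where $\alpha\in(0,1/2)$. Then for every $\varepsilon>0$, $$\delta(C_\varepsilon)\le \frac{b\varepsilon}{r}\,(1+b+2\alpha b).$$
   Context: A quasi-pseudometric type space $(X,d,b)$ consists of a nonempty set $X$, a constant $b\ge 1$ and a map $d:X\times X\to[0,\infty)$ with $d(x,x)=0$ and $d(x,z)\le b\,[d(x,y)+d(y,z)]$ for all $x,y,z\in X$. It is $T_0$ if $d(x,y)=0=d(y,x)$ implies $x=y$. Write $d^s(x,y)=\max\{d(x,y),d(y,x)\}$; the space is bicomplete if it is $T_0$ and every $d^s$-Cauchy sequence converges in $d^s$. For $x\in X$ and nonempty $A\subseteq X$: $d(x,A)=\inf_{a\in A}d(x,a)$, $d(A,x)=\inf_{a\in A}d(a,x)$; for nonempty $A,B$: $H(A,B)=\max\{\sup_{a\in A}d(a,B),\sup_{b'\in B}d(A,b')\}$. $CB(X)$ denotes the nonempty $d^s$-bounded, $d^s$-closed subsets; continuity of $J$ is with respect to $d^s$. For $\varepsilon>0$, $C_\varepsilon=\{x\in X:\sup_{y\in Fx}d^s(Jx,y)\le\varepsilon\}$, and for $A\subseteq X$, $\delta(A)=\sup_{x,y\in A}d(x,y)$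 (the diameter). *)

From Stdlib Require Import Reals Lra ClassicalEpsilon.
Open Scope R_scope.

Section QPM.
Variable X : Type.
Variable d : X -> X -> R.

Definition qpm_type (b : R) : Prop :=
  1 <= b /\
  (forall x y, 0 <= d x y) /\
  (forall x, d x x = 0) /\
  (forall x y z, d x z <= b * (d x y + d y z)).

Definition T0 : Prop := forall x y, d x y = 0 -> d y x = 0 -> x = y.

Definition ds (x y : X) : R := Rmax (d x y) (d y x).

Definition ds_converges (u : nat -> X) (x : X) : Prop :=
  forall eps, 0 < eps -> exists N, forall n, (n >= N)%nat -> ds (u n) x < eps.

Definition ds_Cauchy (u : nat -> X) : Prop :=
  forall eps, 0 < eps -> exists N, forall n m, (n >= N)%nat -> (m >= N)%nat ->
    ds (u n) (u m) < eps.

Definition bicomplete : Prop :=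
  T0 /\ forall u, ds_Cauchy u -> exists x, ds_converges u x.

Definition ds_continuous (J : X -> X) : Prop :=
  forall u x, ds_converges u x -> ds_converges (fun n => J (u n)) (J x).

Definition ds_bounded (A : X -> Prop) : Prop :=
  exists M, forall x y, A x -> A y -> ds x y <= M.

Definition ds_closed (A : X -> Prop) : Prop :=
  forall u x, (forall n, A (u n)) -> ds_converges u x -> A x.

Definition CB (A : X -> Prop) : Prop :=
  (exists a, A a) /\ ds_bounded A /\ ds_closed A.

(* infimum of a set of reals (meaningful when nonempty and bounded below) *)
Definition is_glb (S : R -> Prop) (m : R) : Prop :=
  (forall s, S s -> m <= s) /\ (forall m', (forall s, S s -> m' <= s) -> m' <= m).

Definition Rinf (S : R -> Prop) : R :=
  epsilon (inhabits 0) (fun m => is_glb S m).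

Definition dist_pt_set (x : X) (A : X -> Prop) : R :=
  Rinf (fun r => exists a, A a /\ r = d x a).
Definition dist_set_pt (A : X -> Prop) (x : X) : R :=
  Rinf (fun r => exists a, A a /\ r = d a x).

(* H(A,B) <= c, with H the sup of d(a,B) and d(A,b') (unfolded) *)
Definition H_le (A B : X -> Prop) (c : R) : Prop :=
  (forall a, A a -> dist_pt_set a B <= c) /\
  (forall b', B b' -> dist_set_pt A b' <= c).

Definition C_eps (J : X -> X) (F : X -> X -> Prop) (eps : R) (x : X) : Prop :=
  forall y, F x y -> ds (J x) y <= eps.

Definition diam_le (A : X -> Prop) (c : R) : Prop :=
  forall x y, A x -> A y -> d x y <= c.

End QPM.

(* For x, y in C_eps pick u in Fx; then d(Jx,u) <= eps.  Every point v of Fy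
   satisfies d(v,Jy) <= eps, so the quasi-triangle inequality through v gives
   d(u,Jy) <= b (d(u,Fy) + eps), and d(u,Fy) <= H(Fx,Fy) <= 2 alpha eps.
   One more quasi-triangle inequality through u bounds d(Jx,Jy), and the
   expansiveness r d(x,y) <= d(Jx,Jy) of J transfers the bound to d(x,y). *)
From Stdlib Require Import Reals Lra ClassicalEpsilon.
Open Scope R_scope.

Lemma glb_ex (S : R -> Prop) :
  (exists s, S s) -> (exists m, forall s, S s -> m <= s) -> exists m, is_glb S m.
Proof.
  intros [s0 Hs0] [m Hm].
  destruct (completeness (fun t => exists s, S s /\ t = - s)) as [l [Hub Hl]].
  - exists (- m). intros t [s [Hs ->]]. specialize (Hm s Hs). lra.
  - exists (- s0). eauto.
  - exists (- l). split.
    + intros s Hs. assert (- s <= l) by (apply Hub; eauto). lra.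
    + intros m' Hm'. assert (l <= - m'); [|lra].
      apply Hl. intros t [s [Hs ->]]. specialize (Hm' s Hs). lra.
Qed.

Lemma Rinf_glb (S : R -> Prop) :
  (exists s, S s) -> (exists m, forall s, S s -> m <= s) -> is_glb S (Rinf S).
Proof. intros Hne Hlb. unfold Rinf. apply epsilon_spec, glb_ex; assumption. Qed.

Section PointSetDistance.

Variables (X : Type) (d : X -> X -> R).
Hypothesis d_ge0 : forall x y, 0 <= d x y.

Lemma dist_pt_set_glb (x : X) (A : X -> Prop) :
  (exists a, A a) -> is_glb (fun t => exists a, A a /\ t = d x a) (dist_pt_set X d x A).
Proof.
  intros [a Ha]; apply Rinf_glb.
  - exists (d x a); eauto.
  - exists 0; intros s [a' [_ ->]]; apply d_ge0.
Qed.

Lemma dist_pt_set_le (x a : X) (A : X -> Prop) : A a -> dist_pt_set X d x A <= d x a.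
Proof. intros Ha; apply (dist_pt_set_glb x A (ex_intro _ a Ha)); eauto. Qed.

Lemma dist_pt_set_ge0 (x : X) (A : X -> Prop) : (exists a, A a) -> 0 <= dist_pt_set X d x A.
Proof. intros HA; apply (dist_pt_set_glb x A HA); intros s [a [_ ->]]; apply d_ge0. Qed.

Lemma dist_pt_set_lb (x : X) (A : X -> Prop) (m : R) :
  (exists a, A a) -> (forall a, A a -> m <= d x a) -> m <= dist_pt_set X d x A.
Proof. intros HA Hm; apply (dist_pt_set_glb x A HA); intros s [a [Ha ->]]; auto. Qed.

Lemma d_le_ds (x y : X) : d x y <= ds X d x y.
Proof. apply Rmax_l. Qed.

Lemma d_le_ds_sym (x y : X) : d y x <= ds X d x y.
Proof. apply Rmax_r. Qed.

Variable b : R.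
Hypothesis b_gt0 : 0 < b.
Hypothesis d_qtriangle : forall x y z, d x z <= b * (d x y + d y z).

Lemma d_le_dist_pt_set (u z : X) (A : X -> Prop) (eps : R) :
  (exists a, A a) -> (forall v, A v -> d v z <= eps) ->
  d u z <= b * (dist_pt_set X d u A + eps).
Proof.
  intros HA Hz.
  assert (Hlb : d u z / b - eps <= dist_pt_set X d u A).
  { apply dist_pt_set_lb; [exact HA|]. intros v Hv.
    assert (d u z <= b * (d u v + eps)).
    { pose proof (d_qtriangle u v z); pose proof (Hz v Hv); nra. }
    apply Rle_trans with ((b * (d u v + eps)) / b - eps).
    - unfold Rminus; apply Rplus_le_compat_r, Rmult_le_compat_r;
        [apply Rlt_le, Rinv_0_lt_compat|]; lra.
    - right; field; lra. }
  replace (d u z) with (b * (d u z / b)) by (field; lra).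
  apply Rmult_le_compat_l; lra.
Qed.

End PointSetDistance.

Lemma C_eps_dist_le (X : Type) (d : X -> X -> R) (J : X -> X) (F : X -> X -> Prop)
    (eps : R) (z : X) :
  (forall x y, 0 <= d x y) -> (exists a, F z a) ->
  C_eps X d J F eps z -> dist_pt_set X d (J z) (F z) <= eps.
Proof.
  intros d_ge0 [a Ha] Cz.
  apply Rle_trans with (d (J z) a); [now apply dist_pt_set_le|].
  apply Rle_trans with (ds X d (J z) a); [apply d_le_ds | now apply Cz].
Qed.

Lemma C_eps_image_dist_le (X : Type) (d : X -> X -> R) (b : R)
    (J : X -> X) (F : X -> X -> Prop) (alpha eps : R) (x y : X) :
  qpm_type X d b -> 0 <= alpha -> (exists a, F x a) -> (exists a, F y a) ->
  H_le X d (F x) (F y)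
    (alpha * (dist_pt_set X d (J x) (F x) + dist_pt_set X d (J y) (F y))) ->
  C_eps X d J F eps x -> C_eps X d J F eps y ->
  d (J x) (J y) <= b * eps * (1 + b + 2 * alpha * b).
Proof.
  intros [b_ge1 [d_ge0 [_ d_qtri]]] alpha_ge0 [u Hu] HFy [HFxy _] Cx Cy.
  assert (HJxu : d (J x) u <= eps)
    by (apply Rle_trans with (ds X d (J x) u); [apply d_le_ds | now apply Cx]).
  assert (HuFy : dist_pt_set X d u (F y) <= 2 * alpha * eps).
  { apply Rle_trans with (1 := HFxy u Hu).
    pose proof (C_eps_dist_le X d J F eps x d_ge0 (ex_intro _ u Hu) Cx).
    pose proof (C_eps_dist_le X d J F eps y d_ge0 HFy Cy).
    pose proof (dist_pt_set_ge0 X d d_ge0 (J x) (F x) (ex_intro _ u Hu)).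
    pose proof (dist_pt_set_ge0 X d d_ge0 (J y) (F y) HFy).
    nra. }
  assert (HuJy : d u (J y) <= b * (2 * alpha * eps + eps)).
  { apply Rle_trans with (b * (dist_pt_set X d u (F y) + eps)); [|nra].
    apply d_le_dist_pt_set; auto; try lra.
    intros v Hv; apply Rle_trans with (ds X d (J y) v);
      [apply d_le_ds_sym | now apply Cy]. }
  pose proof (d_qtri (J x) u (J y)).
  nra.
Qed.

Theorem mainTheorem13 (X : Type) (d : X -> X -> R) (b : R)
  (HX : inhabited X)
  (Hqpm : qpm_type X d b)
  (Hbic : bicomplete X d)
  (J : X -> X) (F : X -> X -> Prop) (r alpha : R)
  (HJc : ds_continuous X d J)
  (Hr : 0 < r)
  (HJ : forall x y, r * d x y <= d (J x) (J y))
  (HF : forall x, CB X d (F x))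
  (Halpha : 0 < alpha /\ alpha < 1 / 2)
  (HH : forall x y, H_le X d (F x) (F y)
          (alpha * (dist_pt_set X d (J x) (F x) + dist_pt_set X d (J y) (F y)))) :
  forall eps, 0 < eps ->
    diam_le X d (C_eps X d J F eps) (b * eps / r * (1 + b + 2 * alpha * b)).
Proof.
  intros eps Heps x y Cx Cy.
  assert (Himage : d (J x) (J y) <= b * eps * (1 + b + 2 * alpha * b)).
  { apply C_eps_image_dist_le with F; try apply HF; auto; lra. }
  apply Rmult_le_reg_l with r; [exact Hr|].
  replace (r * (b * eps / r * (1 + b + 2 * alpha * b)))
    with (b * eps * (1 + b + 2 * alpha * b)) by (field; lra).
  apply Rle_trans with (1 := HJ x y); exact Himage.
Qed.
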